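(* Let $\mathcal{W}$ be a periodic labeled wedge of period $p$ and preperiod $q$, $k\in\mathbb{N}$, and let $\pi_k:\mathbb{R}^{\mathcal{V}_k}\to\mathbb{R}^{\mathcal{V}_1}$ and $A_k$ be as below. Then the characteristic polynomial of the restriction of $A_k$ to $\ker(\pi_k)$ is a product of cyclotomic polynomials and $x^d$ for some integer $d\ge0$.
   Context: $\Sigma=\{(i,j)\in\mathbb{N}^2:1\le i\le j\}$; a labeled wedge is $\Phi:\Sigma\to\{N,S,E\}$. Its graph $\Gamma$: vertices $\Sigma$; no edges out of $E$-vertices; $(i,j)\to(i+1,j+1)$ out of $N$-vertices; $(i,j)\to(1,i+1)$ and $(i,j)\to(1,j+1)$ out of $S$-vertices. For $p\ge1,q\ge0$: $i\equiv_{p,q}j$ iff $i=j$ or ($\min\{i,j\}\ge q+1$ and $i\equiv j\bmod p$); on $\Sigma$, $(i,j)\equiv_{p,q}(k,l)$ iff ($i\equiv_{p,q}k$, $j\equiv_{p,q}l$) or ($i\equiv_{p,q}l$, $j\equiv_{p,q}k$). $\mathcal{W}$ is periodic of period $p$ and preperiod $q$ if equivalent vertices have equal labels and $(i,j)$ is labeled $E$ iff $i\equiv_{p,q}j$. $\Gamma_k$ is the quotient of $\Gamma$ by $\equiv_{kp,q}$ (vertex set $\mathcal{V}_k$ = classes; number of edges $[v]\to[w]$ = number of edges from $v$ to members of $[w]$), with adjacency operator $A_k(e_v)=\sum_w\#(v\to w)e_w$ on $\mathbb{R}^{\mathcal{V}_k}$. $\pi_k$ is the linear map with $\pi_k(e_v)=e_{[v]}$,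 where $[v]$ is the $\equiv_{p,q}$-class (vertex of $\Gamma_1$) of $v$. One has $A_1\circ\pi_k=\pi_k\circ A_k$, so $A_k$ preserves $\ker(\pi_k)$. *)

From HB Require Import structures.
From mathcomp Require Import all_boot all_order all_algebra.
From mathcomp Require Import cyclotomic.
From mathcomp Require Import reals.
Set Implicit Arguments. Unset Strict Implicit. Unset Printing Implicit Defensive.
Import Order.TTheory GRing.Theory Num.Theory.

Inductive label := LN | LS | LE.

(* A labeled wedge Phi : Sigma -> {N,S,E}; it is represented as a function on
   nat * nat whose values outside Sigma = {(i,j) | 1 <= i <= j} are irrelevant. *)
Definition inSigma (u : nat * nat) : bool := (1 <= u.1) && (u.1 <= u.2).

Definition eqpq (p q i j : nat) : bool :=
  (i == j) || ((q < minn i j) && (i == j %[mod p])).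

Definition eqpqS (p q : nat) (u v : nat * nat) : bool :=
  (eqpq p q u.1 v.1 && eqpq p q u.2 v.2) || (eqpq p q u.1 v.2 && eqpq p q u.2 v.1).

Definition periodic_wedge (Phi : nat -> nat -> label) (p q : nat) : Prop :=
  0 < p /\
  (forall u v, inSigma u -> inSigma v -> eqpqS p q u v -> Phi u.1 u.2 = Phi v.1 v.2) /\
  (forall i j, inSigma (i, j) -> (Phi i j = LE <-> eqpq p q i j)).

Definition out_edges (Phi : nat -> nat -> label) (u : nat * nat) : seq (nat * nat) :=
  match Phi u.1 u.2 with
  | LN => [:: (u.1.+1, u.2.+1)]
  | LS => [:: (1, u.1.+1); (1, u.2.+1)]
  | LE => [::]
  end.

(* Finite vertex set of the quotient Gamma modulo ==_{m,q} (m = k p >= 1):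
   a class is represented by its unique sorted reduced pair (a+1, b+1) with
   0 <= a <= b <= N, where N = q + m - 1. *)
Definition Vt N := {x : 'I_N.+1 * 'I_N.+1 | (x.1 <= x.2)%N}.

Definition vdim (m q : nat) := (q + m).-1.

Definition redn (m q i : nat) : nat := (
  if i <= q then i else q.+1 + (i - q.+1) %% m)%N.

Definition v0 N : Vt N := exist _ (ord0, ord0) (leqnn 0).

Definition cls (m q : nat) (u : nat * nat) : Vt (vdim m q) :=
  let a := (redn m q u.1).-1 in
  let b := (redn m q u.2).-1 in
  insubd (v0 (vdim m q)) (inord (minn a b), inord (maxn a b)).

Definition rep N (v : Vt N) : nat * nat := (((sval v).1).+1, ((sval v).2).+1).

Local Open Scope ring_scope.

(* Adjacency operator A_k of Gamma_k (quotient mod ==_{kp,q}) in row-vector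
   convention: e_v *m A = sum_w #(v -> w) e_w. *)
Definition Amx (R : nzRingType) (Phi : nat -> nat -> label) (m q : nat)
  : 'M[R]_#|{: Vt (vdim m q)}| :=
  \matrix_(a, b)
    (count (fun u => cls m q u == enum_val b) (out_edges Phi (rep (enum_val a))))%:R.

(* pi_k : R^{V_k} -> R^{V_1}, e_[v]_k |-> e_[v]_1 *)
Definition Pmx (R : nzRingType) (p q k : nat)
  : 'M[R]_(#|{: Vt (vdim (k * p) q)}|, #|{: Vt (vdim p q)}|) :=
  \matrix_(a, b) (cls p q (rep (enum_val a)) == enum_val b)%:R.

Definition kerB (R : fieldType) (p q k : nat) :=
  row_base (kermx (Pmx R p q k)).

Definition restrA (R : fieldType) (Phi : nat -> nat -> label) (p q k : nat)
  : 'M[R]_(\rank (kermx (Pmx R p q k))) :=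
  kerB R p q k *m Amx R Phi (k * p) q *m pinvmx (kerB R p q k).

From HB Require Import structures.
From mathcomp Require Import all_boot all_order all_algebra.
From mathcomp Require Import cyclotomic.
From mathcomp Require Import reals.
From mathcomp Require Import algC zify.
Import Order.TTheory GRing.Theory Num.Theory.

Set Implicit Arguments. Unset Strict Implicit. Unset Printing Implicit Defensive.

(** The kernel of [pi_k] is spanned by the differences [e_[a,b] - e_[a+p,b]]
    with [a > q].  Since [(a,b)] and [(a+p,b)] carry the same label and their
    successors are again [p]-shifts of each other, [A_k] maps each such
    difference to another one or to [0].  Hence [A_k] acts on [ker pi_k]
    through a partial self-map of a finite set, so [A_k^i = A_k^j] on the
    kernel for some [i < j], and every eigenvalue of the restriction is [0]
    or a root of unity.  The restriction is defined over [rat], and a monic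
    rational polynomial with such roots is [X^d] times cyclotomic factors,
    because the minimal polynomial of a primitive [n]-th root of unity is
    [Phi_n]. *)

Lemma iter_obind_periodic (T : finType) (f : T -> option T) :
  exists i j, i < j /\
    forall y, iter i (obind f) (Some y) = iter j (obind f) (Some y).
Proof.
pose N := #|{ffun T -> option T}|.+1.
pose g (j : 'I_N) := [ffun y => iter j (obind f) (Some y)].
have /injectivePn[i [j neq_ij Eij]] : ~~ injectiveb g.
  by apply/injectiveP => /leq_card; rewrite card_ord /N ltnn.
have Eg y : iter i (obind f) (Some y) = iter j (obind f) (Some y).
  by have := congr1 (fun h : {ffun T -> option T} => h y) Eij; rewrite !ffunE.
have [lt_ij|lt_ji|/val_inj eq_ij] := ltngtP i j.
- by exists i, j; split.
- by exists j, i; split => [|y]; rewrite ?Eg.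
- by rewrite eq_ij eqxx in neq_ij.
Qed.

Section Redn.
Variables (m q : nat).

Lemma redn_small i : i <= q -> redn m q i = i.
Proof. by rewrite /redn => ->. Qed.

Lemma redn_big i : q < i -> redn m q i = q.+1 + (i - q.+1) %% m.
Proof. by move=> lt_qi; rewrite /redn ifN // -ltnNge. Qed.

Lemma redn_gt0 i : 0 < i -> 0 < redn m q i.
Proof. by rewrite /redn; case: ifP. Qed.

Lemma redn_gtq i : (q < redn m q i) = (q < i).
Proof. by rewrite /redn; case: ifP; lia. Qed.

Hypothesis m_gt0 : 0 < m.

Lemma redn_leq i : redn m q i <= q + m.
Proof.
rewrite /redn; case: ifP => [le_iq|_]; first lia.
by have := ltn_pmod (i - q.+1) m_gt0; move: (_ %% m) => r; lia.
Qed.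

Lemma redn_id i : i <= q + m -> redn m q i = i.
Proof. by rewrite /redn; case: ifP => // *; rewrite modn_small; lia. Qed.

Lemma redn_idem i : redn m q (redn m q i) = redn m q i.
Proof. exact/redn_id/redn_leq. Qed.

Lemma rednDml i c : 0 < i -> redn m q (redn m q i + c) = redn m q (i + c).
Proof.
move=> i_gt0; case: (leqP i q) => [le_iq|lt_qi]; first by rewrite (redn_small le_iq).
rewrite (redn_big lt_qi) !redn_big; try lia.
have := modnDml (i - q.+1) c m; move: ((i - q.+1) %% m) => r Er.
have -> : q.+1 + r + c - q.+1 = r + c by lia.
by rewrite Er; congr (q.+1 + _ %% m); lia.
Qed.

Lemma rednDr i : q < i -> redn m q (i + m) = redn m q i.
Proof.
move=> lt_qi; rewrite !redn_big; try lia.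
have -> : i + m - q.+1 = i - q.+1 + m by lia.
by rewrite modnDr.
Qed.

End Redn.

Lemma redn_dvdm p m q i : 0 < p -> p %| m -> 0 < m ->
  redn p q (redn m q i) = redn p q i.
Proof.
move=> p_gt0 p_dvd_m m_gt0; case: (leqP i q) => [le_iq|lt_qi].
  by rewrite !redn_small.
rewrite (redn_big _ lt_qi) !redn_big; try lia.
have -> : q.+1 + (i - q.+1) %% m - q.+1 = (i - q.+1) %% m by lia.
by rewrite (modn_dvdm _ p_dvd_m).
Qed.

Lemma eqpq_refl p q a : eqpq p q a a.
Proof. by rewrite /eqpq eqxx. Qed.

Lemma eqpq_redn p m q i : 0 < p -> p %| m -> 0 < m -> eqpq p q (redn m q i) i.
Proof.
move=> p_gt0 p_dvd_m m_gt0; case: (leqP i q) => [le_iq|lt_qi].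
  by rewrite redn_small ?eqpq_refl.
apply/orP; right; rewrite leq_min redn_gtq lt_qi redn_big //=.
by rewrite -modnDmr (modn_dvdm _ p_dvd_m) modnDmr subnKC.
Qed.

Lemma eqpqS_minmax p q a b a' b' : eqpq p q a a' -> eqpq p q b b' ->
  eqpqS p q (minn a b, maxn a b) (minn a' b', maxn a' b').
Proof.
move=> eq_a eq_b; rewrite /eqpqS /=.
by case: (leqP a b) => _; case: (leqP a' b') => _; rewrite eq_a eq_b ?orbT.
Qed.

Section Classes.
Variables (m q : nat).
Hypothesis m_gt0 : 0 < m.

Lemma vdimS : (vdim m q).+1 = q + m.
Proof. by rewrite /vdim prednK //; lia. Qed.

Lemma cls_sym a b : cls m q (a, b) = cls m q (b, a).
Proof. by rewrite /cls /= minnC maxnC. Qed.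

Lemma cls_minmax a b : cls m q (minn a b, maxn a b) = cls m q (a, b).
Proof. by case: (leqP a b) => // _; rewrite cls_sym. Qed.

Lemma cls_redn a b : cls m q (redn m q a, redn m q b) = cls m q (a, b).
Proof. by rewrite /cls /= !redn_idem. Qed.

Lemma rep_cls a b : 0 < a -> 0 < b ->
  rep (cls m q (a, b)) =
  (minn (redn m q a) (redn m q b), maxn (redn m q a) (redn m q b)).
Proof.
move=> a_gt0 b_gt0.
have ra_gt0 := redn_gt0 m q a_gt0; have rb_gt0 := redn_gt0 m q b_gt0.
have ra_le := redn_leq q m_gt0 a; have rb_le := redn_leq q m_gt0 b.
have := vdimS; rewrite /rep /cls /= => vdim_eq.
set x := (inord _, inord _).
have le_x : x.1 <= x.2 by rewrite /x /= !inordK; lia.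
rewrite -[sval _]/(val _) val_insubd le_x /x /= !inordK; try lia.
by congr (_, _); lia.
Qed.

Lemma cls_rep (v : Vt (vdim m q)) : cls m q (rep v) = v.
Proof.
apply: val_inj; case: v => [[x1 x2] /= le_x].
have lt_x1 := ltn_ord x1; have lt_x2 := ltn_ord x2; have := vdimS => vdim_eq.
rewrite /cls /rep /= !redn_id; try lia.
rewrite -[val _]/(val _) val_insubd /=.
by rewrite (minn_idPl le_x) (maxn_idPr le_x) !inord_val le_x.
Qed.

End Classes.

Definition pair_label (Phi : nat -> nat -> label) a b := Phi (minn a b) (maxn a b).

Section PeriodicLabels.
Variables (Phi : nat -> nat -> label) (p q : nat).
Hypothesis Phi_periodic : periodic_wedge Phi p q.

Lemma pair_label_eqpq a b a' b' : 0 < a -> 0 < b -> 0 < a' -> 0 < b' ->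
  eqpq p q a a' -> eqpq p q b b' -> pair_label Phi a b = pair_label Phi a' b'.
Proof.
move=> a_gt0 b_gt0 a'_gt0 b'_gt0 eq_a eq_b; case: Phi_periodic => _ [Phi_eq _].
apply: (Phi_eq (minn a b, maxn a b) (minn a' b', maxn a' b')).
- by rewrite /inSigma /= leq_min a_gt0 b_gt0 geq_min leq_maxl.
- by rewrite /inSigma /= leq_min a'_gt0 b'_gt0 geq_min leq_maxl.
exact: eqpqS_minmax.
Qed.

Lemma pair_label_redn m a b : p %| m -> 0 < m -> 0 < a -> 0 < b ->
  pair_label Phi (redn m q a) (redn m q b) = pair_label Phi a b.
Proof.
have p_gt0 : 0 < p by case: Phi_periodic.
move=> p_dvd_m m_gt0 a_gt0 b_gt0.
by apply: pair_label_eqpq; rewrite ?redn_gt0 ?eqpq_redn.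
Qed.

Lemma pair_labelDl a b : q < a -> 0 < b ->
  pair_label Phi (a + p) b = pair_label Phi a b.
Proof.
move=> lt_qa b_gt0; apply: pair_label_eqpq; rewrite ?eqpq_refl //; try lia.
by rewrite /eqpq leq_min modnDr eqxx lt_qa (leq_trans lt_qa (leq_addr _ _)) orbT.
Qed.

End PeriodicLabels.

Local Open Scope ring_scope.

Definition stack_rows (F : nzRingType) (T : finType) n (w : T -> 'rV[F]_n)
  : 'M[F]_(#|T|, n) := \matrix_i w (enum_val i).

Section PartialRowMap.
Variables (F : fieldType) (T : finType) (n : nat).
Variables (v : T -> 'rV[F]_n) (f : T -> option T) (A : 'M[F]_n).
Hypothesis v_mulA : forall y, v y *m A = oapp v 0 (f y).

Lemma stack_rows_sub y : (v y <= stack_rows v)%MS.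
Proof.
have <- : row (enum_rank y) (stack_rows v) = v y by rewrite rowK enum_rankK.
exact: row_sub.
Qed.

Lemma oapp_stack_rows_sub o : (oapp v 0 o <= stack_rows v)%MS.
Proof. by case: o => [y|] /=; rewrite ?stack_rows_sub ?sub0mx. Qed.

Lemma stack_rows_mulmxX j :
  stack_rows v *m A ^+ j = stack_rows (fun y => oapp v 0 (iter j (obind f) (Some y))).
Proof.
elim: j => [|j IHj]; first by rewrite expr0 mulmx1.
rewrite exprSr mulmxA IHj; apply/row_matrixP => i; rewrite row_mul !rowK /=.
by case: (iter j _ _) => [y|] /=; rewrite ?v_mulA ?mul0mx.
Qed.

Lemma stack_rows_mulmx_sub : (stack_rows v *m A <= stack_rows v)%MS.
Proof.
rewrite -[A]expr1 stack_rows_mulmxX; apply/row_subP => i.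
by rewrite rowK oapp_stack_rows_sub.
Qed.

Lemma stack_rows_mulmxX_periodic :
  exists i j, (i < j)%N /\ stack_rows v *m A ^+ i = stack_rows v *m A ^+ j.
Proof.
have [i [j [lt_ij Eij]]] := iter_obind_periodic f.
exists i, j; split => //; rewrite !stack_rows_mulmxX.
by apply/row_matrixP => r; rewrite !rowK Eij.
Qed.

End PartialRowMap.

Lemma restr_mx_exp_eq (F : fieldType) r s n (B : 'M[F]_(r, n)) (D : 'M[F]_(s, n))
    (A : 'M[F]_n) i j :
  row_free B -> (B *m A <= B)%MS -> (B <= D)%MS -> D *m A ^+ i = D *m A ^+ j ->
  (B *m A *m pinvmx B) ^+ i = (B *m A *m pinvmx B) ^+ j.
Proof.
move=> freeB stableB sBD DAij; set M := B *m A *m pinvmx B.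
have BA : B *m A = M *m B by rewrite mulmxKpV.
have BAX l : B *m A ^+ l = M ^+ l *m B.
  elim: l => [|l IHl]; first by rewrite !expr0 mulmx1 mul1mx.
  by rewrite !exprSr -!mulmxE mulmxA IHl -mulmxA BA mulmxA.
apply: (row_free_inj freeB); rewrite -!BAX.
by have [W ->] := submxP sBD; rewrite -!mulmxA DAij.
Qed.

Definition ev (F : nzRingType) N (w : Vt N) : 'rV[F]_#|{: Vt N}| :=
  delta_mx 0 (enum_rank w).

Lemma eq_enum_rank_val (T : finType) (x : T) (j : 'I_#|T|) :
  (j == enum_rank x) = (x == enum_val j).
Proof. by rewrite -(inj_eq enum_val_inj) enum_rankK eq_sym. Qed.

Section BasisVectors.
Variable F : nzRingType.

Lemma ev_mul N n (w : Vt N) (M : 'M[F]_(#|{: Vt N}|, n)) :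
  ev F w *m M = row (enum_rank w) M.
Proof. by rewrite rowE. Qed.

Lemma ev_mulAmx Phi m q (w : Vt (vdim m q)) :
  ev F w *m Amx F Phi m q =
  match Phi (rep w).1 (rep w).2 with
  | LN => ev F (cls m q ((rep w).1.+1, (rep w).2.+1))
  | LS => ev F (cls m q (1%N, (rep w).1.+1)) + ev F (cls m q (1%N, (rep w).2.+1))
  | LE => 0
  end.
Proof.
rewrite ev_mul; apply/rowP => j; rewrite !mxE enum_rankK /out_edges.
by case: (Phi _ _) => /=; rewrite ?mxE ?eqxx /= ?eq_enum_rank_val ?addn0 ?natrD.
Qed.

Lemma ev_mulPmx p q k (w : Vt (vdim (k * p) q)) :
  ev F w *m Pmx F p q k = ev F (cls p q (rep w)).
Proof.
rewrite ev_mul; apply/rowP => j.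
by rewrite !mxE enum_rankK eqxx /= eq_enum_rank_val.
Qed.

End BasisVectors.

Section Wedge.
Variables (F : fieldType) (Phi : nat -> nat -> label) (p q k : nat).
Hypothesis Phi_periodic : periodic_wedge Phi p q.
Hypothesis k_gt0 : (0 < k)%N.

Local Notation m := (k * p)%N.
Local Notation cl := (cls m q).
Local Notation e := (@ev F (vdim m q)).
Local Notation A := (Amx F Phi m q).
Local Notation P := (Pmx F p q k).

Let p_gt0 : (0 < p)%N. Proof. by case: Phi_periodic. Qed.
Let m_gt0 : (0 < m)%N. Proof. by rewrite muln_gt0 k_gt0 p_gt0. Qed.
Let p_dvd_m : (p %| m)%N. Proof. exact: dvdn_mull. Qed.

Lemma clsSl_redn a b : (0 < a)%N -> cl ((redn m q a).+1, b) = cl (a.+1, b).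
Proof.
move=> a_gt0; rewrite -(cls_redn _ m_gt0 a.+1) -(addn1 a) -rednDml //.
by rewrite addn1 cls_redn.
Qed.

Lemma ev_mulA a b : (0 < a)%N -> (0 < b)%N ->
  e (cl (a, b)) *m A =
  match pair_label Phi a b with
  | LN => e (cl (a.+1, b.+1))
  | LS => e (cl (a.+1, 1%N)) + e (cl (b.+1, 1%N))
  | LE => 0
  end.
Proof.
move=> a_gt0 b_gt0; rewrite ev_mulAmx (rep_cls _ m_gt0) //=.
rewrite -/(pair_label Phi _ _) (pair_label_redn Phi_periodic) //.
have ra_gt0 := redn_gt0 m q a_gt0; have rb_gt0 := redn_gt0 m q b_gt0.
set ra := redn m q a; set rb := redn m q b.
case: (pair_label Phi a b) => //.
- rewrite -minnSS -maxnSS cls_minmax // clsSl_redn // cls_sym clsSl_redn //.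
  by rewrite cls_sym.
- have -> : e (cl (1%N, (minn ra rb).+1)) + e (cl (1%N, (maxn ra rb).+1)) =
            e (cl (1%N, ra.+1)) + e (cl (1%N, rb.+1)).
    by case: (leqP ra rb) => // _; rewrite addrC.
  by rewrite !(cls_sym _ _ 1%N) !clsSl_redn.
Qed.

Lemma ev_mulP a b : (0 < a)%N -> (0 < b)%N ->
  e (cl (a, b)) *m P = ev F (cls p q (a, b)).
Proof.
move=> a_gt0 b_gt0; rewrite ev_mulPmx (rep_cls _ m_gt0) // cls_minmax.
by rewrite -(cls_redn _ p_gt0) !redn_dvdm // cls_redn.
Qed.

Definition shift_diff a b : 'rV[F]_#|{: Vt (vdim m q)}| :=
  if (q < a)%N && (0 < b)%N then e (cl (a, b)) - e (cl (a + p, b)) else 0.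

Lemma shift_diff_mulA a b : (q < a)%N -> (0 < b)%N ->
  shift_diff a b *m A =
  match pair_label Phi a b with
  | LN => shift_diff a.+1 b.+1
  | LS => shift_diff a.+1 1
  | LE => 0
  end.
Proof.
move=> lt_qa b_gt0; rewrite /shift_diff lt_qa b_gt0 /= mulmxBl !ev_mulA; try lia.
rewrite (pair_labelDl Phi_periodic) //; case: (pair_label Phi a b).
- by rewrite ifT ?addSn //; apply/andP; split; lia.
- rewrite ifT ?addSn; last by apply/andP; split; lia.
  by rewrite opprD addrACA subrr addr0.
- by rewrite subrr.
Qed.

Lemma shift_diff_redn a b : (0 < a)%N -> (0 < b)%N ->
  shift_diff (redn m q a) (redn m q b) = shift_diff a b.
Proof.
move=> a_gt0 b_gt0; rewrite /shift_diff redn_gtq (redn_gt0 m q b_gt0) b_gt0.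
case: ifP => // _; rewrite (cls_redn _ m_gt0); congr (_ - _).
by rewrite -(cls_redn _ m_gt0 (redn m q a + p)) rednDml // redn_idem // cls_redn.
Qed.

Lemma shift_diff_mulP a b : shift_diff a b *m P = 0.
Proof.
rewrite /shift_diff; case: ifP => [/andP[lt_qa b_gt0]|_]; last by rewrite mul0mx.
rewrite mulmxBl !ev_mulP //; try lia.
by rewrite -(cls_redn _ p_gt0 (a + p)) rednDr // cls_redn // subrr.
Qed.

Local Notation I := ('I_(q + m).+1 * 'I_(q + m).+1)%type.

Definition shift_diff_at (y : I) := shift_diff y.1 y.2.

Definition shift_diff_next (y : I) : option I :=
  if (q < y.1)%N && (0 < y.2)%N then
    match pair_label Phi y.1 y.2 with
    | LN => Some (inord (redn m q y.1.+1), inord (redn m q y.2.+1))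
    | LS => Some (inord (redn m q y.1.+1), inord 1)
    | LE => None
    end
  else None.

Lemma inord_redn i : (@inord (q + m) (redn m q i) : nat) = redn m q i.
Proof. by rewrite inordK // ltnS redn_leq. Qed.

Lemma shift_diff_at_mulA y :
  shift_diff_at y *m A = oapp shift_diff_at 0 (shift_diff_next y).
Proof.
rewrite /shift_diff_at /shift_diff_next; case: ifP => [/andP[lt_qa b_gt0]|no_diff].
  rewrite shift_diff_mulA //; case: (pair_label Phi _ _) => //=.
  - by rewrite !inord_redn shift_diff_redn.
  - have redn1 : redn m q 1 = 1%N by rewrite redn_id //; lia.
    rewrite inord_redn inordK; last by rewrite ltnS; lia.
    by rewrite -[in LHS](@shift_diff_redn y.1.+1 1) // redn1.
by rewrite /shift_diff no_diff mul0mx.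
Qed.

Local Notation D := (stack_rows shift_diff_at).

Lemma shift_diff_sub a b : (shift_diff a b <= D)%MS.
Proof.
have [/andP[lt_qa b_gt0]|no_diff] := boolP ((q < a)%N && (0 < b)%N); last first.
  by rewrite /shift_diff (negbTE no_diff) sub0mx.
rewrite -shift_diff_redn //; last lia.
have := stack_rows_sub shift_diff_at (inord (redn m q a), inord (redn m q b)).
by rewrite /shift_diff_at /= !inord_redn.
Qed.

Lemma evB_shift_sub a b t : (q < a)%N -> (0 < b)%N ->
  (e (cl (a, b)) - e (cl ((a + t * p)%N, b)) <= D)%MS.
Proof.
move=> lt_qa b_gt0; elim: t => [|t IHt]; first by rewrite mul0n addn0 subrr sub0mx.
have -> : (a + t.+1 * p = a + t * p + p)%N by rewrite mulSn; lia.
rewrite -(subrK (e (cl ((a + t * p)%N, b))) (e (cl (a, b)))) -addrA.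
apply: addmx_sub; first exact: IHt.
have := shift_diff_sub (a + t * p) b; rewrite /shift_diff ifT //.
by apply/andP; split; lia.
Qed.

Lemma evB_rednl_sub a b : (0 < a)%N -> (0 < b)%N ->
  (e (cl (a, b)) - e (cl (redn p q a, b)) <= D)%MS.
Proof.
move=> a_gt0 b_gt0; case: (leqP a q) => [le_aq|lt_qa].
  by rewrite redn_small // subrr sub0mx.
have Ea : a = (q.+1 + (a - q.+1) %% p + (a - q.+1) %/ p * p)%N.
  by have := divn_eq (a - q.+1) p; lia.
rewrite redn_big // {1}Ea -opprB eqmx_opp; apply: evB_shift_sub => //; lia.
Qed.

Lemma evB_redn_sub a b : (0 < a)%N -> (0 < b)%N ->
  (e (cl (a, b)) - e (cl (redn p q a, redn p q b)) <= D)%MS.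
Proof.
move=> a_gt0 b_gt0.
rewrite -(subrK (e (cl (redn p q a, b))) (e (cl (a, b)))) -addrA.
apply: addmx_sub; first exact: evB_rednl_sub.
rewrite (cls_sym _ _ (redn p q a) b) (cls_sym _ _ (redn p q a) (redn p q b)).
by apply: evB_rednl_sub; rewrite ?redn_gt0.
Qed.

Definition lift_mx : 'M[F]_(#|{: Vt (vdim p q)}|, #|{: Vt (vdim m q)}|) :=
  \matrix_i e (cl (rep (enum_val i))).

(* [1 - P * lift_mx] fixes [kermx P], and its row at a vertex [w] of [Gamma_k]
   is [e_w - e_w'], where [w'] has the same image as [w] under [pi_k]. *)
Lemma kermx_sub_shift_diffs : (kermx P <= D)%MS.
Proof.
have -> : kermx P = kermx P *m (1%:M - P *m lift_mx).
  by rewrite mulmxBr mulmx1 mulmxA mulmx_ker mul0mx subr0.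
apply: mulmx_sub; apply/row_subP => i.
rewrite rowE mulmxBr mulmx1 mulmxA.
have -> : delta_mx 0 i = e (enum_val i) by rewrite /ev enum_valK.
rewrite ev_mulPmx ev_mul rowK enum_rankK.
rewrite -{1}(cls_rep m_gt0 (enum_val i)).
have : (0 < (rep (enum_val i)).1)%N /\ (0 < (rep (enum_val i)).2)%N by [].
case: (rep _) => a b /= [a_gt0 b_gt0].
by rewrite (rep_cls _ p_gt0) // cls_minmax evB_redn_sub.
Qed.

Lemma shift_diffs_sub_kermx : (D <= kermx P)%MS.
Proof. by apply/row_subP => i; rewrite rowK sub_kermx shift_diff_mulP. Qed.

Lemma restrA_exp_periodic :
  exists i j, (i < j)%N /\ restrA F Phi p q k ^+ i = restrA F Phi p q k ^+ j.
Proof.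
have [i [j [lt_ij Dij]]] := stack_rows_mulmxX_periodic shift_diff_at_mulA.
have sBD : (kerB F p q k <= D)%MS.
  by rewrite /kerB eq_row_base kermx_sub_shift_diffs.
exists i, j; split => //; apply: (restr_mx_exp_eq _ _ sBD Dij).
  exact: row_base_free.
rewrite /kerB eq_row_base; apply: submx_trans (submxMr A sBD) _.
exact: submx_trans (stack_rows_mulmx_sub shift_diff_at_mulA) shift_diffs_sub_kermx.
Qed.

End Wedge.

Lemma map_mxX (F1 F2 : fieldType) (f : {rmorphism F1 -> F2}) r (M : 'M[F1]_r) j :
  map_mx f (M ^+ j) = map_mx f M ^+ j.
Proof.
elim: j => [|j IHj]; first by rewrite !expr0 map_mx1.
by rewrite !exprS -!mulmxE map_mxM IHj.
Qed.

Lemma eigenvalue_exp_eq (F : fieldType) r (M : 'M[F]_r) i j z :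
  M ^+ i = M ^+ j -> eigenvalue M z -> z ^+ i = z ^+ j.
Proof.
move=> Mij /eigenvalueP[v Mv v_neq0].
have vMX l : v *m M ^+ l = z ^+ l *: v.
  elim: l => [|l IHl]; first by rewrite !expr0 mulmx1 scale1r.
  by rewrite exprSr -mulmxE mulmxA IHl -scalemxAl Mv scalerA -exprSr.
apply/eqP; move/eqP: (congr1 (mulmx v) Mij); rewrite !vMX -subr_eq0 -scalerBl.
by rewrite scaler_eq0 (negbTE v_neq0) orbF subr_eq0.
Qed.

Lemma exp_eq_root_of_unity (R : idomainType) (z : R) i j :
  (i < j)%N -> z ^+ i = z ^+ j ->
  z = 0 \/ exists2 n, (0 < n)%N & n.-primitive_root z.
Proof.
move=> lt_ij zij; have [->|z_neq0] := eqVneq z 0; [by left | right].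
have zji : z ^+ (j - i) = 1.
  apply: (mulfI (expf_neq0 i z_neq0)).
  by rewrite -exprD subnKC ?(ltnW lt_ij) // mulr1.
have ji_gt0 : (0 < j - i)%N by rewrite subn_gt0.
have [n prim_z _] := prim_order_exists ji_gt0 zji.
by exists n; first exact: prim_order_gt0 prim_z.
Qed.

Definition Xcyclotomic_prod (R : comNzRingType) (c : {poly R}) : Prop :=
  exists (d : nat) (s : seq nat), all (fun n => 0 < n)%N s /\
    c = 'X^d * \prod_(n <- s) map_poly intr 'Phi_n.

Section XcyclotomicProd.
Variable R : comNzRingType.
Implicit Type c : {poly R}.

Lemma Xcyclotomic_prod1 : Xcyclotomic_prod (1 : {poly R}).
Proof. by exists 0%N, [::]; rewrite expr0 big_nil mulr1. Qed.

Lemma Xcyclotomic_prodMX c : Xcyclotomic_prod c -> Xcyclotomic_prod (c * 'X).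
Proof. by move=> [d [s [s_gt0 ->]]]; exists d.+1, s; rewrite exprSr mulrAC. Qed.

Lemma Xcyclotomic_prodM_Phi c n : (0 < n)%N -> Xcyclotomic_prod c ->
  Xcyclotomic_prod (c * map_poly intr 'Phi_n).
Proof.
move=> n_gt0 [d [s [s_gt0 ->]]]; exists d, (n :: s).
by rewrite /= n_gt0 big_cons -mulrA [_ * map_poly _ _]mulrC.
Qed.

Lemma Xcyclotomic_prod_map (S : comNzRingType) (f : {rmorphism R -> S}) c :
  Xcyclotomic_prod c -> Xcyclotomic_prod (map_poly f c).
Proof.
move=> [d [s [s_gt0 ->]]]; exists d, s; split => //.
rewrite rmorphM rmorphXn /= map_polyX rmorph_prod; congr (_ * _).
apply: eq_bigr => n _; rewrite /= -map_poly_comp.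
by apply: eq_map_poly => z /=; rewrite rmorph_int.
Qed.

End XcyclotomicProd.

Lemma Cyclotomic_dvdp (c : {poly rat}) n (z : algC) :
  n.-primitive_root z -> root (map_poly ratr c) z ->
  map_poly intr 'Phi_n %| c.
Proof.
move=> prim_z cz; have [p0 [Ep0 _] dv_p0] := minCpolyP z.
suff -> : map_poly intr 'Phi_n = p0 by rewrite -dv_p0.
apply: (map_inj_poly (fmorph_inj (ratr : rat -> algC))); first by rewrite rmorph0.
rewrite -Ep0 (minCpoly_cyclotomic prim_z) -(Cintr_Cyclotomic prim_z) -map_poly_comp.
by apply: eq_map_poly => x /=; rewrite rmorph_int.
Qed.

Lemma Xcyclotomic_prod_rat (c : {poly rat}) i j :
  c \is monic -> (i < j)%N ->
  (forall z : algC, root (map_poly ratr c) z -> z ^+ i = z ^+ j) ->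
  Xcyclotomic_prod c.
Proof.
move=> + lt_ij; move: {2}(size c) (leqnn (size c)) => N.
elim: N c => [|N IHN] c size_c mon_c c_roots.
  by move: size_c; rewrite leqn0 size_poly_eq0 (negbTE (monic_neq0 mon_c)).
have [size_c1|size_c_gt1] := leqP (size c) 1.
  move: mon_c; rewrite (size1_polyC size_c1) monicE lead_coefC => /eqP ->.
  exact: Xcyclotomic_prod1.
have [z cz] : exists z : algC, root (map_poly ratr c) z.
  by apply/closed_rootP; rewrite size_map_poly gtn_eqF.
have IHdiv g : g \is monic -> (1 < size g)%N -> g %| c -> Xcyclotomic_prod (c %/ g).
  move=> mon_g size_g /divpK Ec; have mon_cg : c %/ g \is monic.
    by rewrite -(monicMr _ mon_g) Ec.
  apply: IHN mon_cg _ => [|w cgw].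
    rewrite size_divp ?monic_neq0 //.
    by move: size_c size_g; move: (size c) (size g); lia.
  by apply: c_roots; rewrite -Ec rmorphM rootM cgw.
have [z0|[n n_gt0 prim_z]] := exp_eq_root_of_unity lt_ij (c_roots z cz).
  have dvX : 'X %| c.
    have c0 : root c 0 by rewrite -(fmorph_root (ratr : rat -> algC)) rmorph0 -z0.
    by move: c0; rewrite root_factor_theorem subr0.
  rewrite -(divpK dvX); apply/Xcyclotomic_prodMX/IHdiv => //.
    exact: monicX.
  by rewrite size_polyX.
have dvPhi := Cyclotomic_dvdp prim_z cz.
rewrite -(divpK dvPhi); apply/(Xcyclotomic_prodM_Phi n_gt0)/IHdiv => //.
  rewrite monicE lead_coef_map_inj ?(monicP (Cyclotomic_monic n)) //.
  exact: intr_inj.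
by rewrite size_map_inj_poly ?size_Cyclotomic ?ltnS ?totient_gt0 //; apply: intr_inj.
Qed.

Lemma char_poly_Xcyclotomic_prod r (M : 'M[rat]_r) i j :
  (i < j)%N -> M ^+ i = M ^+ j -> Xcyclotomic_prod (char_poly M).
Proof.
move=> lt_ij Mij; apply: Xcyclotomic_prod_rat (char_poly_monic M) lt_ij _ => z.
rewrite map_char_poly -eigenvalue_root_char; apply: eigenvalue_exp_eq.
by rewrite -!map_mxX Mij.
Qed.

Lemma char_poly_restr_castmx (F : fieldType) r r' n (e : r = r')
    (B : 'M[F]_(r, n)) (A : 'M_n) :
  char_poly (castmx (e, erefl n) B *m A *m pinvmx (castmx (e, erefl n) B))
  = char_poly (B *m A *m pinvmx B).
Proof. by case: r' / e; rewrite castmx_id. Qed.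

Section MapRestrA.
Variables (F1 F2 : fieldType) (f : {rmorphism F1 -> F2}).

Lemma map_Pmx p q k : map_mx f (Pmx F1 p q k) = Pmx F2 p q k.
Proof. by apply/matrixP => i j; rewrite !mxE rmorph_nat. Qed.

Lemma map_Amx Phi m q : map_mx f (Amx F1 Phi m q) = Amx F2 Phi m q.
Proof. by apply/matrixP => i j; rewrite !mxE rmorph_nat. Qed.

Lemma char_poly_restrA_map Phi p q k :
  char_poly (restrA F2 Phi p q k) = map_poly f (char_poly (restrA F1 Phi p q k)).
Proof.
rewrite /restrA /kerB -map_Pmx -map_Amx -map_kermx map_char_poly.
set K := kermx (Pmx F1 p q k).
rewrite (map_mxM f (row_base K *m _)) (map_mxM f (row_base K)) map_pinvmx.
by rewrite map_row_base char_poly_restr_castmx.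
Qed.

End MapRestrA.

Theorem proposition5p3 (R : realType) (Phi : nat -> nat -> label) (p q k : nat) :
  periodic_wedge Phi p q -> (0 < k)%N ->
  exists (d : nat) (s : seq nat),
    all (fun n => 0 < n)%N s /\
    char_poly (restrA R Phi p q k)
      = 'X^d * \prod_(n <- s) map_poly (fun z : int => z%:~R) 'Phi_n.
Proof.
move=> Phi_periodic k_gt0.
have [i [j [lt_ij Mij]]] := restrA_exp_periodic rat Phi_periodic k_gt0.
rewrite (char_poly_restrA_map ratr).
exact/Xcyclotomic_prod_map/(char_poly_Xcyclotomic_prod lt_ij Mij).
Qed.
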